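(* For every graph $U$, every graph $G\in\mathcal{D}(U)$ and every $r\in\mathbb{N}$, $\operatorname{col}^*_r(G)\le\operatorname{col}^*_r(U)$.
   Context: All graphs are simple and countable. For a total order $\preceq$ of $V(G)$, a vertex $v$ and $r\in\mathbb{N}$, $S_r(G,\preceq,v)$ is the set of vertices $w$ for which there is a path $v=w_0,w_1,\dots,w_{r'}=w$ with $0\le r'\le r$, $w\preceq v$, and $v\prec w_i$ for all $1\le i\le r'-1$. An ordered clique is a finite clique together with a linear order of its vertices. The rooted $r$-colouring number $\operatorname{col}^*_r(G)$ is the minimum integer $m$ such that for every ordered clique $C$ of $G$ there is a total order $\preceq$ of $V(G)$ in which the vertices of $C$ precede all other vertices and appear in the given order, with $|S_r(G,\preceq,v)|\le m$ for every vertex $v$ (infinite if no such $m$). The torso of a node $x$ of a tree-decomposition $(B_x:x\in V(T))$ is $G[B_x]$ plus edges $vw$ for all $v,w\in B_x\cap B_y$ with $xy\in E(T)$. $\mathcal{D}(U)$ is the class of graphs having a tree-decomposition in which every torso is isomorphic to a subgraph of $U$. *)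

From Stdlib Require Import Arith List Lia ClassicalEpsilon.
Import ListNotations.

Record graph := Graph {
  vert : Type;
  adj : vert -> vert -> Prop;
  adj_sym : forall u v, adj u v -> adj v u;
  adj_irrefl : forall v, ~ adj v v;
  vert_countable : exists f : vert -> nat, forall u v, f u = f v -> u = v
}.

Definition is_path {X : Type} (e : X -> X -> Prop) (p : nat -> X) (k : nat) : Prop :=
  (forall i j, i <= k -> j <= k -> p i = p j -> i = j) /\
  (forall i, i < k -> e (p i) (p (S i))).

Definition total_order {X : Type} (le : X -> X -> Prop) : Prop :=
  (forall x, le x x) /\
  (forall x y, le x y -> le y x -> x = y) /\
  (forall x y z, le x y -> le y z -> le x z) /\
  (forall x y, le x y \/ le y x).

Definition lt_of {X : Type} (le : X -> X -> Prop) (x y : X) : Prop := le x y /\ x <> y.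

Definition Sr (G : graph) (le : vert G -> vert G -> Prop) (r : nat) (v : vert G)
    (w : vert G) : Prop :=
  exists (p : nat -> vert G) (r' : nat),
    r' <= r /\ is_path (@adj G) p r' /\ p 0 = v /\ p r' = w /\ le w v /\
    (forall i, 1 <= i -> i <= r' - 1 -> lt_of le v (p i)).

Definition card_le {X : Type} (P : X -> Prop) (m : nat) : Prop :=
  exists l : list X, length l <= m /\ forall x, P x -> In x l.

(** An ordered clique: a finite clique listed in its linear order. *)
Definition ordered_clique (G : graph) (C : list (vert G)) : Prop :=
  NoDup C /\
  forall i j x y, i <> j -> nth_error C i = Some x -> nth_error C j = Some y -> adj G x y.

Definition order_extends {X : Type} (le : X -> X -> Prop) (C : list X) : Prop :=
  (forall i j x y, i < j -> nth_error C i = Some x -> nth_error C j = Some y ->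
     lt_of le x y) /\
  (forall c x, In c C -> ~ In x C -> lt_of le c x).

Definition colstar_le (G : graph) (r m : nat) : Prop :=
  forall C, ordered_clique G C ->
    exists le : vert G -> vert G -> Prop,
      total_order le /\ order_extends le C /\
      forall v, card_le (Sr G le r v) m.

(** col*_r(G) as an extended natural number (None = infinity): the minimum m
    with colstar_le G r m, or None if no such m exists. *)
Definition is_colstar (G : graph) (r : nat) (k : option nat) : Prop :=
  match k with
  | Some m => colstar_le G r m /\ forall m', colstar_le G r m' -> m <= m'
  | None => forall m, ~ colstar_le G r m
  end.

Definition colstar (G : graph) (r : nat) : option nat :=
  epsilon (inhabits None) (is_colstar G r).

Definition ole (a b : option nat) : Prop :=
  match a, b with
  | _, None => True
  | None, Some _ => False
  | Some x, Some y => x <= y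
  end.

Definition is_tree {X : Type} (e : X -> X -> Prop) : Prop :=
  (forall x y, e x y -> e y x) /\
  (forall x, ~ e x x) /\
  (forall x y, exists p k, is_path e p k /\ p 0 = x /\ p k = y) /\
  (forall (p : nat -> X) (k : nat), 3 <= k -> is_path e p (k - 1) ->
     ~ e (p (k - 1)) (p 0)).

Definition tree_decomposition (G : graph) {X : Type} (eT : X -> X -> Prop)
    (B : X -> vert G -> Prop) : Prop :=
  is_tree eT /\
  (forall v, exists x, B x v) /\
  (forall u v, adj G u v -> exists x, B x u /\ B x v) /\
  (forall v x y, B x v -> B y v ->
     exists p k, is_path eT p k /\ p 0 = x /\ p k = y /\ forall i, i <= k -> B (p i) v).

Definition torso_adj (G : graph) {X : Type} (eT : X -> X -> Prop)
    (B : X -> vert G -> Prop) (x : X) (u w : {v : vert G | B x v}) : Prop :=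
  proj1_sig u <> proj1_sig w /\
  (adj G (proj1_sig u) (proj1_sig w) \/
   exists y, eT x y /\ B y (proj1_sig u) /\ B y (proj1_sig w)).

Definition torso_in (G U : graph) {X : Type} (eT : X -> X -> Prop)
    (B : X -> vert G -> Prop) (x : X) : Prop :=
  exists f : {v : vert G | B x v} -> vert U,
    (forall u w, f u = f w -> u = w) /\
    (forall u w, torso_adj G eT B x u w -> adj U (f u) (f w)).

Definition in_D (U G : graph) : Prop :=
  exists (X : Type) (eT : X -> X -> Prop) (B : X -> vert G -> Prop),
    tree_decomposition G eT B /\ forall x, torso_in G U eT B x.

From Stdlib Require Import Arith List Lia Classical ClassicalEpsilon ProofIrrelevance.
Import ListNotations.

(** Let [(T, (B_x))] be a tree-decomposition of [G] whose torsos embed in [U], assume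
  [col*_r(U) <= m], and let [C] be an ordered clique of [G]. For [r = 0] every
  weak-colouring set is a singleton and the claim is immediate. For [r >= 1]:
  - root [T] at a node [rho] whose bag contains [C] (Helly property of subtrees);
  - for a vertex [u] let [top u] be the node of least depth whose bag contains [u];
  - at each node [x] the adhesion set [B_x ∩ B_(parent x)] (resp. [C] at the root) is a
    clique of the torso, which embeds in [U]; so it has at most [m] vertices and the
    torso has an order starting with it whose weak-colouring sets have size [<= m];
  - order [G] by depth of [top u], then by [top u], then by the torso order at [top u].
  A path witnessing [w ∈ S_r(G, <=, v)] only leaves the bag of [top v] to run through
  subtrees hanging below [top v]; its visits to that bag therefore form a path of the
  torso witnessing [w ∈ S_r(torso, <=, v)], which bounds [|S_r(G, <=, v)|] by [m]. *)

Lemma least_nat (P : nat -> Prop) :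
  (exists n, P n) -> exists n, P n /\ forall n', P n' -> n <= n'.
Proof.
  intros [n Hn]. revert Hn.
  induction n as [n IH] using (well_founded_induction lt_wf). intros Hn.
  destruct (classic (exists n', n' < n /\ P n')) as [[n' [Hlt Hn']]|Hno].
  - exact (IH n' Hlt Hn').
  - exists n. split; [exact Hn|]. intros n' Hn'.
    destruct (le_lt_dec n n'); [assumption|]. exfalso; eauto.
Qed.

Lemma last_before (P : nat -> Prop) i : P 0 -> 0 < i ->
  exists a, a < i /\ P a /\ forall l, a < l -> l < i -> ~ P l.
Proof.
  intros H0. induction i as [|i IH]; intros Hi; [lia|].
  destruct (classic (P i)) as [Pi|nPi].
  - exists i. repeat split; [lia|exact Pi|]. intros; lia.
  - destruct i as [|i]; [contradiction|].
    destruct (IH ltac:(lia)) as [a [Ha [Pa Hn]]].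
    exists a. repeat split; [lia|exact Pa|]. intros l H1 H2.
    destruct (Nat.eq_dec l (S i)) as [->|]; [exact nPi|]. apply Hn; lia.
Qed.

(** The marked indices [0 = s 0 < s 1 < ... < s k = i] of a walk, between which
    consecutive marked indices satisfy [Rel]: extracting the visits of a walk to a set. *)
Lemma marked_subsequence (M : nat -> Prop) (Rel : nat -> nat -> Prop) :
  M 0 ->
  (forall a b, a < b -> M a -> M b -> (forall l, a < l -> l < b -> ~ M l) -> Rel a b) ->
  forall i, M i -> exists k (s : nat -> nat),
    s 0 = 0 /\ s k = i /\ k <= i /\
    (forall j j', j < j' -> j' <= k -> s j < s j') /\
    (forall j, j < k -> Rel (s j) (s (S j))) /\
    (forall j, j <= k -> M (s j)).
Proof.
  intros M0 Hgap i. induction i as [i IH] using (well_founded_induction lt_wf). intros Mi.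
  destruct (Nat.eq_dec i 0) as [->|Hi0].
  { exists 0, (fun _ => 0). repeat split; auto; intros; lia. }
  destruct (last_before M i M0 ltac:(lia)) as [a [Ha [Ma Hnone]]].
  destruct (IH a Ha Ma) as [k [s [S0 [Sk [Hk [Hmono [Hrel HM]]]]]]].
  exists (S k), (fun j => if j <=? k then s j else i).
  assert (Hs_le : forall j, j <= k -> s j <= a).
  { intros j Hj. destruct (Nat.eq_dec j k) as [->|]; [lia|].
    pose proof (Hmono j k ltac:(lia) (le_n _)). lia. }
  repeat split.
  - exact S0.
  - destruct (Nat.leb_spec (S k) k); [lia|reflexivity].
  - lia.
  - intros j j' Hj Hj'. destruct (Nat.leb_spec j k); [|lia].
    destruct (Nat.leb_spec j' k); [apply Hmono; lia|].
    pose proof (Hs_le j ltac:(lia)). lia.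
  - intros j Hj. destruct (Nat.leb_spec j k); [|lia]. destruct (Nat.leb_spec (S j) k).
    + apply Hrel. lia.
    + replace j with k by lia. rewrite Sk. apply Hgap; auto.
  - intros j Hj. destruct (Nat.leb_spec j k); [apply HM; lia|exact Mi].
Qed.

Lemma nodup_neq {A} (l : list A) i j a b : NoDup l -> i <> j ->
  nth_error l i = Some a -> nth_error l j = Some b -> a <> b.
Proof.
  intros Hn Hij Ha Hb E. subst b. apply Hij. apply (proj1 (NoDup_nth_error l) Hn).
  - apply nth_error_Some. congruence.
  - congruence.
Qed.

Lemma preimage_list {A Y} (P : A -> Prop) (phi : A -> Y) :
  (forall a b, P a -> P b -> phi a = phi b -> a = b) ->
  forall lU, exists lG, length lG <= length lU /\
    forall a, P a -> In (phi a) lU -> In a lG.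
Proof.
  intros Hinj lU. induction lU as [|y lU IH].
  - exists []. split; [simpl; lia|]. intros a _ [].
  - destruct IH as [lG [Hl Hin]].
    destruct (classic (exists a, P a /\ phi a = y)) as [[a0 [Pa0 E]]|Hno].
    + exists (a0 :: lG). split; [simpl; lia|]. intros a Pa [E'|E'].
      * left. apply Hinj; congruence.
      * right. auto.
    + exists lG. split; [simpl; lia|]. intros a Pa [E'|E']; [|auto].
      exfalso. eauto.
Qed.

Lemma finite_enum {A} (P : A -> Prop) m :
  (forall l, NoDup l -> (forall a, In a l -> P a) -> length l <= m) ->
  exists l, NoDup l /\ forall a, P a <-> In a l.
Proof.
  intros Hb.
  enough (Hgrow : forall n l, m - length l <= n -> NoDup l -> (forall a, In a l -> P a) ->
            exists l', NoDup l' /\ forall a, P a <-> In a l')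
    by (apply (Hgrow m []); [simpl; lia|constructor|intros a []]).
  induction n as [|n IH]; intros l Hl Hnd HP;
    (destruct (classic (exists a, P a /\ ~ In a l)) as [[a [Pa Na]]|Hno];
     [| exists l; split; [exact Hnd|]; intros b; split; [|apply HP];
        intros Pb; apply NNPP; intros Nb; apply Hno; eauto]);
    (assert (Hcons : forall b, In b (a :: l) -> P b) by (intros b [E|E]; [subst|]; auto);
     assert (Hlen : length (a :: l) <= m) by (apply Hb; [constructor|]; auto)).
  - simpl in Hlen. lia.
  - apply (IH (a :: l)); [simpl in *; lia|constructor; auto|exact Hcons].
Qed.

Lemma max_in_list {A} (F : A -> nat) (l : list A) : l <> [] ->
  exists a, In a l /\ forall b, In b l -> F b <= F a.
Proof.
  induction l as [|x l IH]; intros H; [congruence|].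
  destruct l as [|y l'].
  - exists x. split; [left; auto|]. intros b [E|[]]; subst; auto.
  - destruct (IH ltac:(congruence)) as [a [Ha Hm]].
    destruct (le_lt_dec (F x) (F a)).
    + exists a. split; [right; auto|]. intros b [E|E]; [subst|]; auto.
    + exists x. split; [left; auto|]. intros b [E|E]; [subst; auto|].
      specialize (Hm b E). lia.
Qed.

Lemma lift_list {A} (P : A -> Prop) (l : list A) : (forall a, In a l -> P a) ->
  exists l' : list {a | P a}, map (@proj1_sig _ _) l' = l.
Proof.
  induction l as [|a l IH]; intros HP; [exists []; reflexivity|].
  destruct IH as [l' E]; [intros; apply HP; right; auto|].
  exists (exist _ a (HP a (or_introl eq_refl)) :: l'). simpl. congruence.
Qed.

Lemma lift_fun {A} (P : A -> Prop) (f : nat -> A) k (d : {a | P a}) :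
  (forall i, i <= k -> P (f i)) ->
  exists p : nat -> {a | P a}, forall i, i <= k -> proj1_sig (p i) = f i.
Proof.
  intros HP.
  exists (fun i => match le_dec i k with
                   | left Hi => exist _ (f i) (HP i Hi) | right _ => d end).
  intros i Hi. destruct (le_dec i k); [reflexivity|contradiction].
Qed.

Lemma nth_error_map_inv {A B} (f : A -> B) l n b :
  nth_error (map f l) n = Some b -> exists a, nth_error l n = Some a /\ f a = b.
Proof.
  rewrite nth_error_map. destruct (nth_error l n) as [a|]; simpl; [|discriminate].
  intros H. injection H as <-. eauto.
Qed.

Lemma sig_ext {A} {P : A -> Prop} (s t : {a | P a}) : proj1_sig s = proj1_sig t -> s = t.
Proof. destruct s, t. simpl. intros ->. f_equal. apply proof_irrelevance. Qed.

(** Every duplicate-free list [C] over a countable type is an initial segment of some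
    total order: list the elements of [C] first, then everything else by its code. *)
Lemma extending_order {A} (C : list A) (g : A -> nat) :
  (forall u w, g u = g w -> u = w) -> NoDup C ->
  exists le : A -> A -> Prop, total_order le /\ order_extends le C.
Proof.
  intros ginj Hnd.
  set (idx := fun u => epsilon (inhabits 0) (fun i => nth_error C i = Some u)).
  assert (Hidx : forall i u, nth_error C i = Some u -> idx u = i).
  { intros i u Hi. assert (Hu : nth_error C (idx u) = Some u).
    { unfold idx. apply epsilon_spec. eauto. }
    apply (proj1 (NoDup_nth_error C) Hnd); [apply nth_error_Some|]; congruence. }
  set (key := fun u => if excluded_middle_informative (In u C)
                       then idx u else length C + g u).
  assert (Kin : forall i u, nth_error C i = Some u -> key u = i /\ i < length C).
  { intros i u Hi. unfold key. destruct (excluded_middle_informative (In u C)) as [_|Hn].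
    - split; [apply Hidx; exact Hi|apply nth_error_Some; congruence].
    - exfalso. apply Hn. eapply nth_error_In; eauto. }
  assert (Kout : forall u, ~ In u C -> key u = length C + g u).
  { intros u Hu. unfold key. destruct (excluded_middle_informative (In u C)); tauto. }
  assert (Kinj : forall u w, key u = key w -> u = w).
  { intros u w E.
    destruct (classic (In u C)) as [Hu|Hu], (classic (In w C)) as [Hw|Hw].
    - destruct (In_nth_error _ _ Hu) as [i Hi], (In_nth_error _ _ Hw) as [j Hj].
      destruct (Kin i u Hi), (Kin j w Hj). congruence.
    - destruct (In_nth_error _ _ Hu) as [i Hi]. destruct (Kin i u Hi).
      rewrite (Kout w Hw) in E. lia.
    - destruct (In_nth_error _ _ Hw) as [j Hj]. destruct (Kin j w Hj).
      rewrite (Kout u Hu) in E. lia.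
    - rewrite !Kout in E by assumption. apply ginj. lia. }
  exists (fun u w => key u <= key w). split.
  - repeat split; intros; try lia. apply Kinj; lia.
  - split.
    + intros i j a b Hij Ha Hb. destruct (Kin i a Ha), (Kin j b Hb).
      split; [lia|]. intros ->. lia.
    + intros c u Hc Hu. destruct (In_nth_error _ _ Hc) as [i Hi]. destruct (Kin i c Hi).
      split; [rewrite (Kout u Hu); lia|]. intros ->. contradiction.
Qed.

Lemma colstar_le_of_uniform (H : graph) r m :
  (forall le v, card_le (Sr H le r v) m) -> colstar_le H r m.
Proof.
  intros Hall C [Hnd _]. destruct (vert_countable H) as [g ginj].
  destruct (extending_order C g ginj Hnd) as [le [Hto Hext]]. eauto.
Qed.

Lemma Sr_self (H : graph) le r v : le v v -> Sr H le r v v.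
Proof.
  intros Hvv. exists (fun _ => v), 0.
  repeat split; auto; intros; lia.
Qed.

(** Paths of length 0 only reach their start: [col*_0] is at most [1]. *)
Lemma colstar_le_zero (H : graph) m : (vert H -> 1 <= m) -> colstar_le H 0 m.
Proof.
  intros Hm. apply colstar_le_of_uniform. intros le v. exists [v].
  split; [specialize (Hm v); simpl; lia|].
  intros w [p [k [Hk [_ [H0 [Hw _]]]]]]. left. replace k with 0 in Hw by lia. congruence.
Qed.

Lemma colstar_le_empty (H : graph) r m : ~ inhabited (vert H) -> colstar_le H r m.
Proof.
  intros Hni. apply colstar_le_of_uniform. intros le v. exfalso. exact (Hni (inhabits v)).
Qed.

(** A nonempty graph needs at least one colour: [v] lies in its own set. *)
Lemma colstar_le_pos (H : graph) r m : colstar_le H r m -> vert H -> 1 <= m.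
Proof.
  intros HH v.
  assert (Hnil : ordered_clique H []).
  { split; [constructor|]. intros [|i] j x y _ Hx; discriminate. }
  destruct (HH [] Hnil) as [le [[Hrefl _] [_ Hcard]]].
  destruct (Hcard v) as [[|x l] [Hl Hin]]; [|simpl in Hl; lia].
  destruct (Hin v (Sr_self H le r v (Hrefl v))).
Qed.

(** For [r >= 1] the last vertex of an ordered clique sees all of it in its
    weak-colouring set, so ordered cliques have at most [m] vertices. *)
Lemma clique_length_le (H : graph) r m L :
  1 <= r -> colstar_le H r m -> ordered_clique H L -> length L <= m.
Proof.
  intros Hr HH HL. destruct (HH L HL) as [le [[Hrefl _] [[Hord _] Hcard]]].
  destruct HL as [Hnd Hadj].
  destruct (length L) as [|n] eqn:Elen; [lia|].
  destruct (nth_error L n) as [vL|] eqn:EvL.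
  2:{ apply nth_error_None in EvL. lia. }
  destruct (Hcard vL) as [l [Hl Hin]].
  enough (Hinc : incl L l) by (pose proof (NoDup_incl_length Hnd Hinc); lia).
  intros b Hb. apply Hin. destruct (In_nth_error _ _ Hb) as [ib Hib].
  assert (ib < S n) by (rewrite <- Elen; apply nth_error_Some; congruence).
  destruct (Nat.eq_dec ib n) as [->|Hne].
  { rewrite EvL in Hib. injection Hib as <-. apply Sr_self, Hrefl. }
  exists (fun i => if i =? 0 then vL else b), 1.
  repeat split; try lia.
  - intros i j Hi Hj E. destruct i as [|[|]], j as [|[|]]; simpl in E; try lia;
      exfalso; eapply (nodup_neq L n ib); eauto.
  - intros i Hi. replace i with 0 by lia. simpl. eapply (Hadj n ib); eauto.
  - apply (Hord ib n b vL); auto. lia.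
Qed.

(** Rooted colouring bounds pass to subgraphs: pull the order of [U] back along an
    injective, edge-preserving map [f]; paths map to paths, so weak-colouring sets
    inject into those of [U]. *)
Lemma colstar_le_embedding (H U : graph) (f : vert H -> vert U) r m :
  (forall u w, f u = f w -> u = w) -> (forall u w, adj H u w -> adj U (f u) (f w)) ->
  colstar_le U r m -> colstar_le H r m.
Proof.
  intros finj fadj HU C [Hnd Hadj].
  assert (HfC : ordered_clique U (map f C)).
  { split.
    - apply NoDup_map_NoDup_ForallPairs; [intros a b _ _; apply finj|exact Hnd].
    - intros i j a' b' Hij Ha Hb. rewrite nth_error_map in Ha, Hb.
      destruct (nth_error C i) as [a|] eqn:Ea; [|discriminate].
      destruct (nth_error C j) as [b|] eqn:Eb; [|discriminate].
      injection Ha as <-. injection Hb as <-. eapply fadj, Hadj; eauto. }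
  destruct (HU _ HfC) as [leU [[Hrefl [Hanti [Htrans Htot]]] [[Hord Hfirst] Hcard]]].
  exists (fun a b => leU (f a) (f b)). split; [|split].
  - repeat split; eauto.
  - split.
    + intros i j a b Hij Ha Hb.
      destruct (Hord i j (f a) (f b) Hij) as [Hle Hne]; try (apply map_nth_error; auto).
      split; [exact Hle|]. congruence.
    + intros c u Hc Hu. destruct (Hfirst (f c) (f u)) as [Hle Hne].
      * apply in_map. exact Hc.
      * intros Hm. apply in_map_iff in Hm as [c' [E Hc']].
        apply finj in E. subst. contradiction.
      * split; [exact Hle|]. congruence.
  - intros v. destruct (Hcard (f v)) as [lU [HlU Hin]].
    destruct (preimage_list (fun _ => True) f (fun a b _ _ => finj a b) lU)
      as [lH [HlH HinH]].
    exists lH. split; [lia|].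
    intros w [q [k [Hk [[Hinj Hedge] [H0 [Hkw [Hwv Hint]]]]]]].
    apply HinH; [exact I|]. apply Hin.
    exists (fun i => f (q i)), k. split; [exact Hk|]. split; [split|].
    + intros i j Hi Hj E. apply Hinj; auto.
    + intros i Hi. apply fadj, Hedge, Hi.
    + split; [congruence|]. split; [congruence|]. split; [exact Hwv|].
      intros i H1 H2. destruct (Hint i H1 H2) as [Hle Hne].
      split; [exact Hle|]. intros E. apply Hne, finj, E.
Qed.

Definition lex {A} (key : A -> nat) (R : A -> A -> Prop) (a b : A) : Prop :=
  key a < key b \/ (key a = key b /\ R a b).

Lemma lex_total {A} (key : A -> nat) (R : A -> A -> Prop) :
  (forall a, R a a) ->
  (forall a b, key a = key b -> R a b -> R b a -> a = b) ->
  (forall a b c, key a = key b -> key b = key c -> R a b -> R b c -> R a c) ->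
  (forall a b, key a = key b -> R a b \/ R b a) ->
  total_order (lex key R).
Proof.
  unfold lex. intros Hrefl Hanti Htrans Htot. repeat split.
  - intros a. right. auto.
  - intros a b [H1|[E1 H1]] [H2|[E2 H2]]; try lia. auto.
  - intros a b c [H1|[E1 H1]] [H2|[E2 H2]]; try (left; lia). right. split; [lia|eauto].
  - intros a b. destruct (Nat.lt_trichotomy (key a) (key b)) as [Hl|[E|Hl]]; auto.
    destruct (Htot a b E); auto.
Qed.

Lemma lex_key_le {A} (key : A -> nat) R a b : lex key R a b -> key a <= key b.
Proof. intros [H|[H _]]; lia. Qed.

Lemma lex_same_key {A} (key : A -> nat) R a b : key a = key b -> lex key R a b <-> R a b.
Proof. unfold lex. intros E. split; [intros [H|[_ H]]; [lia|exact H]|auto]. Qed.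

Lemma torso_adj_sym (G : graph) {X} (eT : X -> X -> Prop) (B : X -> vert G -> Prop) x u w :
  torso_adj G eT B x u w -> torso_adj G eT B x w u.
Proof.
  intros [Hne [Hadj|[y [Hxy [Hu Hw]]]]]; split; auto.
  - left. apply adj_sym, Hadj.
  - right. eauto.
Qed.

Lemma torso_adj_irrefl (G : graph) {X} (eT : X -> X -> Prop) (B : X -> vert G -> Prop) x u :
  ~ torso_adj G eT B x u u.
Proof. intros [Hne _]. apply Hne. reflexivity. Qed.

Lemma subtype_countable (G : graph) (P : vert G -> Prop) :
  exists f : {v | P v} -> nat, forall u w, f u = f w -> u = w.
Proof.
  destruct (vert_countable G) as [g ginj]. exists (fun s => g (proj1_sig s)).
  intros [u Hu] [w Hw] E. apply ginj in E. simpl in E. subst w.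
  f_equal. apply proof_irrelevance.
Qed.

Definition torso (G : graph) {X} (eT : X -> X -> Prop) (B : X -> vert G -> Prop) (x : X)
  : graph :=
  Graph {v | B x v} (torso_adj G eT B x) (torso_adj_sym G eT B x)
    (torso_adj_irrefl G eT B x) (subtype_countable G (B x)).

Lemma torso_colstar (G U : graph) {X} (eT : X -> X -> Prop) (B : X -> vert G -> Prop) x r m :
  torso_in G U eT B x -> colstar_le U r m -> colstar_le (torso G eT B x) r m.
Proof. intros [f [finj fadj]]. apply colstar_le_embedding with (f := f); assumption. Qed.

Section RootedTree.
Variable X : Type.
Variable eT : X -> X -> Prop.
Hypothesis Hsym : forall x y, eT x y -> eT y x.
Hypothesis Hirr : forall x, ~ eT x x.
Hypothesis Hconn : forall x y, exists p k, is_path eT p k /\ p 0 = x /\ p k = y.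
Hypothesis Hacyc : forall (p : nat -> X) (k : nat), 3 <= k -> is_path eT p (k - 1) ->
  ~ eT (p (k - 1)) (p 0).
Variable rho : X.

Definition walk (q : nat -> X) k := forall i, i < k -> eT (q i) (q (S i)).
Definition reachable_in x n := exists q, walk q n /\ q 0 = rho /\ q n = x.

Definition is_depth x n := reachable_in x n /\ forall n', reachable_in x n' -> n <= n'.
Definition depth x := epsilon (inhabits 0) (is_depth x).

Lemma depth_spec x : is_depth x (depth x).
Proof.
  unfold depth. apply epsilon_spec.
  destruct (Hconn rho x) as [q [k [[_ Hq] [H0 Hk]]]].
  apply least_nat. exists k, q. auto.
Qed.

Lemma depth_root : depth rho = 0.
Proof.
  destruct (depth_spec rho) as [_ Hmin].
  enough (reachable_in rho 0) by (specialize (Hmin 0 H); lia).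
  exists (fun _ => rho). split; [intros i Hi; lia|auto].
Qed.

Lemma depth_zero x : depth x = 0 -> x = rho.
Proof.
  intros E. destruct (depth_spec x) as [[q [_ [H0 Hn]]] _]. rewrite E in Hn. congruence.
Qed.

Lemma depth_edge a b : eT a b -> depth b <= depth a + 1.
Proof.
  intros Hab. destruct (depth_spec a) as [[q [Hw [H0 Hn]]] _].
  destruct (depth_spec b) as [_ Hmin]. apply Hmin.
  exists (fun i => if i <=? depth a then q i else b). split; [|split].
  - intros i Hi. destruct (Nat.leb_spec i (depth a)), (Nat.leb_spec (S i) (depth a)); try lia.
    + apply Hw; lia.
    + replace i with (depth a) by lia. rewrite Hn. exact Hab.
  - exact H0.
  - destruct (Nat.leb_spec (depth a + 1) (depth a)); [lia|reflexivity].
Qed.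

Lemma parent_exists x : x <> rho -> exists y, eT x y /\ depth y + 1 = depth x.
Proof.
  intros Hx. destruct (depth_spec x) as [[q [Hw [H0 Hn]]] _].
  destruct (depth x) as [|n] eqn:E; [congruence|].
  exists (q n). split.
  - apply Hsym. rewrite <- Hn. apply Hw. lia.
  - assert (depth (q n) <= n).
    { apply (proj2 (depth_spec (q n))). exists q. split; auto. intros i Hi; apply Hw; lia. }
    assert (S n <= depth (q n) + 1) by (rewrite <- E, <- Hn; apply depth_edge, Hw; lia).
    lia.
Qed.

Definition parent x := epsilon (inhabits rho) (fun y => eT x y /\ depth y + 1 = depth x).

Lemma parent_spec x : x <> rho -> eT x (parent x) /\ depth (parent x) + 1 = depth x.
Proof. intros H. unfold parent. apply epsilon_spec. apply parent_exists; auto. Qed.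

Definition anc z i := Nat.iter i parent z.

Lemma anc_depth z i : i <= depth z -> depth (anc z i) + i = depth z.
Proof.
  induction i as [|i IH]; intros H; unfold anc in *; simpl; [lia|].
  specialize (IH ltac:(lia)).
  assert (Nat.iter i parent z <> rho) by (intros E; rewrite E, depth_root in IH; lia).
  destruct (parent_spec (Nat.iter i parent z)); auto. lia.
Qed.

Lemma anc_top z : anc z (depth z) = rho.
Proof. apply depth_zero. pose proof (anc_depth z (depth z) (le_n _)). lia. Qed.

Lemma anc_not_root z t : t < depth z -> anc z t <> rho.
Proof. intros H E. pose proof (anc_depth z t ltac:(lia)). rewrite E, depth_root in *. lia. Qed.

Lemma first_common_ancestor a b : depth a = depth b -> exists j, j <= depth a /\
  anc a j = anc b j /\ forall i, i < j -> anc a i <> anc b i.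
Proof.
  intros E.
  destruct (least_nat (fun j => j <= depth a /\ anc a j = anc b j)) as [j [[H1 H2] H3]].
  - exists (depth a). split; auto. rewrite anc_top, E, anc_top. reflexivity.
  - exists j. repeat split; auto. intros i Hi Heq.
    assert (i <= depth a) as Hia by lia. specialize (H3 i (conj Hia Heq)). lia.
Qed.

(** The walk up [j] levels from [a] to a common ancestor, down to [b], then to [x]:
    closing it with one more edge would create a cycle in the tree. *)
Definition cyc a b (x : X) j i :=
  if i <? j then anc a i else if i <=? 2 * j then anc b (2 * j - i) else x.

(** Below [j] the ancestors of [a] and [b] are disjoint, so [cyc] is a path. *)
Section Cycle.
Variables a b x : X.
Variable j : nat.
Hypothesis Hab : a <> b.
Hypothesis Hd : depth a = depth b.
Hypothesis Hj : j <= depth a.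
Hypothesis Hmeet : anc a j = anc b j.
Hypothesis Hmin : forall i, i < j -> anc a i <> anc b i.

Lemma cyc_l i : i < j -> cyc a b x j i = anc a i.
Proof. intros H. unfold cyc. destruct (Nat.ltb_spec i j); [auto|lia]. Qed.
Lemma cyc_r i : j <= i -> i <= 2 * j -> cyc a b x j i = anc b (2 * j - i).
Proof.
  intros H H'. unfold cyc.
  destruct (Nat.ltb_spec i j), (Nat.leb_spec i (2 * j)); auto; lia.
Qed.
Lemma cyc_x i : 2 * j < i -> cyc a b x j i = x.
Proof.
  intros H. unfold cyc. destruct (Nat.ltb_spec i j), (Nat.leb_spec i (2 * j)); auto; lia.
Qed.

Lemma cyc_depth i : i <= 2 * j -> depth (cyc a b x j i) <= depth a.
Proof.
  intros H. destruct (lt_dec i j).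
  - rewrite cyc_l by auto. pose proof (anc_depth a i ltac:(lia)). lia.
  - rewrite cyc_r by lia. pose proof (anc_depth b (2 * j - i) ltac:(lia)). lia.
Qed.

Lemma cyc_inj i i' : i <= 2 * j -> i' <= 2 * j -> cyc a b x j i = cyc a b x j i' -> i = i'.
Proof.
  intros H1 H2 E. destruct (lt_dec i j), (lt_dec i' j).
  - rewrite !cyc_l in E by auto. pose proof (anc_depth a i ltac:(lia)).
    pose proof (anc_depth a i' ltac:(lia)). rewrite E in *. lia.
  - rewrite cyc_l in E by auto. rewrite cyc_r in E by lia.
    pose proof (anc_depth a i ltac:(lia)). pose proof (anc_depth b (2 * j - i') ltac:(lia)).
    rewrite E in *. assert (i = 2 * j - i') by lia. subst i.
    exfalso. apply (Hmin (2 * j - i')); [lia|exact E].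
  - rewrite (cyc_l i') in E by auto. rewrite (cyc_r i) in E by lia.
    pose proof (anc_depth a i' ltac:(lia)). pose proof (anc_depth b (2 * j - i) ltac:(lia)).
    rewrite <- E in *. assert (i' = 2 * j - i) by lia. subst i'.
    exfalso. apply (Hmin (2 * j - i)); [lia|symmetry; exact E].
  - rewrite !cyc_r in E by lia. pose proof (anc_depth b (2 * j - i) ltac:(lia)).
    pose proof (anc_depth b (2 * j - i') ltac:(lia)). rewrite E in *. lia.
Qed.

Lemma cyc_edge i : i < 2 * j -> eT (cyc a b x j i) (cyc a b x j (S i)).
Proof.
  intros H. destruct (lt_dec (S i) j).
  - rewrite !cyc_l by lia. apply parent_spec, anc_not_root. lia.
  - destruct (lt_dec i j).
    + rewrite cyc_l, cyc_r by lia. replace (2 * j - S i) with (S i) by lia.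
      replace (S i) with j by lia. rewrite <- Hmeet. replace j with (S i) by lia.
      apply parent_spec, anc_not_root. lia.
    + rewrite !cyc_r by lia. replace (2 * j - i) with (S (2 * j - S i)) by lia.
      apply Hsym, parent_spec, anc_not_root. lia.
Qed.

Lemma cyc_path : is_path eT (cyc a b x j) (2 * j).
Proof. split; [intros; apply cyc_inj; auto|apply cyc_edge]. Qed.

Lemma cyc_path_ext : eT b x -> depth x = depth a + 1 -> is_path eT (cyc a b x j) (2 * j + 1).
Proof.
  intros Hbx Hx. split.
  - intros i i' H1 H2 E.
    destruct (Nat.eq_dec i (2 * j + 1)), (Nat.eq_dec i' (2 * j + 1)); try lia.
    + subst i. rewrite (cyc_x (2 * j + 1)) in E by lia.
      pose proof (cyc_depth i' ltac:(lia)). rewrite <- E in *. lia.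
    + subst i'. rewrite (cyc_x (2 * j + 1)) in E by lia.
      pose proof (cyc_depth i ltac:(lia)). rewrite E in *. lia.
    + apply cyc_inj; lia || assumption.
  - intros i Hi. destruct (Nat.eq_dec i (2 * j)) as [->|].
    + rewrite cyc_r, cyc_x by lia. rewrite Nat.sub_diag. exact Hbx.
    + apply cyc_edge. lia.
Qed.
End Cycle.

Lemma edge_depths_differ a b : eT a b -> depth a <> depth b.
Proof.
  intros Hab Hd. assert (a <> b) as Hne by (intros ->; exact (Hirr b Hab)).
  destruct (first_common_ancestor a b Hd) as [j [Hj [Hm Hmin]]].
  assert (1 <= j) by (destruct j; [exfalso; exact (Hne Hm)|lia]).
  apply (Hacyc (cyc a b a j) (2 * j + 1)); [lia| |];
    replace (2 * j + 1 - 1) with (2 * j) by lia.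
  - eapply cyc_path; eauto.
  - rewrite cyc_r, cyc_l, Nat.sub_diag by lia. apply Hsym, Hab.
Qed.

Lemma parent_unique x y1 y2 : eT x y1 -> eT x y2 ->
  depth y1 + 1 = depth x -> depth y2 + 1 = depth x -> y1 = y2.
Proof.
  intros H1 H2 E1 E2. apply NNPP. intros Hne.
  destruct (first_common_ancestor y1 y2 ltac:(lia)) as [j [Hj [Hm Hmin]]].
  assert (1 <= j) by (destruct j; [exfalso; exact (Hne Hm)|lia]).
  apply (Hacyc (cyc y1 y2 x j) (2 * j + 2)); [lia| |];
    replace (2 * j + 2 - 1) with (2 * j + 1) by lia.
  - eapply cyc_path_ext; eauto; lia.
  - rewrite cyc_x, cyc_l by lia. exact H1.
Qed.

Lemma edge_parent a b : eT a b ->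
  (a <> rho /\ b = parent a) \/ (b <> rho /\ a = parent b).
Proof.
  intros H. pose proof (depth_edge a b H). pose proof (depth_edge b a (Hsym _ _ H)).
  pose proof (edge_depths_differ a b H).
  destruct (Nat.lt_ge_cases (depth b) (depth a)).
  - left. assert (a <> rho) as Ha by (intros ->; rewrite depth_root in *; lia).
    split; auto. destruct (parent_spec a Ha). apply (parent_unique a); auto; lia.
  - right. assert (b <> rho) as Hb by (intros ->; rewrite depth_root in *; lia).
    split; auto. destruct (parent_spec b Hb). apply (parent_unique b); auto; lia.
Qed.

Definition below y z := exists j, anc z j = y /\ depth y + j = depth z.

Lemma below_refl y : below y y.
Proof. exists 0. auto. Qed.

Lemma below_parent z : z <> rho -> below (parent z) z.
Proof. intros H. exists 1. destruct (parent_spec z H). split; [reflexivity|lia]. Qed.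

Lemma below_trans a b c : below a b -> below b c -> below a c.
Proof.
  intros [j' [E1 D1]] [j [E2 D2]]. exists (j' + j). split; [|lia].
  unfold anc in *. rewrite Nat.iter_add, E2. exact E1.
Qed.

Lemma below_depth y z : below y z -> depth y <= depth z.
Proof. intros [j [_ D]]. lia. Qed.

Lemma below_eq y z : below y z -> depth y = depth z -> y = z.
Proof. intros [j [E D]] D2. replace j with 0 in E by lia. symmetry; exact E. Qed.

Lemma below_up y z : below y z -> z <> y -> below y (parent z).
Proof.
  intros [j [E D]] Hne. destruct j as [|j]; [simpl in E; congruence|].
  assert (z <> rho) as Hz by (intros ->; rewrite depth_root in D; lia).
  exists j. destruct (parent_spec z Hz). split; [|lia].
  unfold anc in *. rewrite Nat.iter_succ_r in E. exact E.
Qed.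

Lemma descending_path q k : is_path eT q k -> 1 <= k -> q 1 <> rho -> q 0 = parent (q 1) ->
  forall i, 1 <= i -> i <= k -> below (q 1) (q i).
Proof.
  intros [Hinj He] Hk H1 H0.
  assert (Hdown : forall i, i < k -> q (S i) <> rho /\ q i = parent (q (S i))).
  { induction i as [|i IH]; intros Hi; auto.
    destruct (IH ltac:(lia)) as [_ Hup].
    destruct (edge_parent _ _ (He (S i) Hi)) as [[Hn E]|]; auto.
    exfalso. rewrite <- Hup in E. pose proof (Hinj (S (S i)) i ltac:(lia) ltac:(lia) E). lia. }
  induction i as [|i IH]; intros Hi Hik; [lia|].
  destruct (Nat.eq_dec i 0) as [->|]; [apply below_refl|].
  apply below_trans with (q i); [apply IH; lia|].
  destruct (Hdown i ltac:(lia)) as [Hn ->]. apply below_parent, Hn.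
Qed.

Lemma path_first_step q k : is_path eT q k -> 1 <= k ->
  (q 0 <> rho /\ q 1 = parent (q 0)) \/
  (q 1 <> rho /\ q 0 = parent (q 1) /\ forall i, 1 <= i -> i <= k -> below (q 1) (q i)).
Proof.
  intros Hp Hk. destruct (edge_parent _ _ (proj2 Hp 0 Hk)) as [H|[Hn E]]; [left; auto|right].
  repeat split; auto. intros i H1 H2; eapply descending_path; eauto.
Qed.

Lemma leave_subtree y q k : walk q k -> below y (q 0) -> ~ below y (q k) ->
  exists i, i < k /\ q i = y /\ y <> rho /\ q (S i) = parent y.
Proof.
  intros He H0 Hk.
  assert (Hind : forall n, n <= k -> (forall i, i <= n -> below y (q i)) \/
            exists i, i < n /\ q i = y /\ y <> rho /\ q (S i) = parent y).
  { induction n as [|n IH]; intros Hn.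
    - left. intros i Hi. replace i with 0 by lia. exact H0.
    - destruct (IH ltac:(lia)) as [Hin|[i [Hi R]]]; [|right; exists i; split; [lia|exact R]].
      destruct (classic (below y (q (S n)))) as [HS|HnS].
      + left. intros i Hi. destruct (Nat.eq_dec i (S n)) as [->|]; [exact HS|apply Hin; lia].
      + right. exists n. split; [lia|].
        destruct (edge_parent _ _ (He n ltac:(lia))) as [[Hr E]|[Hr E]].
        * destruct (classic (q n = y)) as [<-|Neq]; [auto|].
          exfalso. apply HnS. rewrite E. apply below_up; auto.
        * exfalso. apply HnS. apply below_trans with (q n); auto.
          rewrite E. apply below_parent, Hr. }
  destruct (Hind k (le_n _)) as [Hin|Hex]; [|exact Hex].
  exfalso. apply Hk, Hin, le_n.
Qed.

Section RootedDecomposition.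
Variable G : graph.
Variable B : X -> vert G -> Prop.
Hypothesis Hcov : forall v, exists x, B x v.
Hypothesis Hedge : forall u v, adj G u v -> exists x, B x u /\ B x v.
Hypothesis Hbcon : forall v x y, B x v -> B y v ->
  exists p k, is_path eT p k /\ p 0 = x /\ p k = y /\ forall i, i <= k -> B (p i) v.

Definition is_top u x := B x u /\ forall y, B y u -> depth x <= depth y.
Definition top u := epsilon (inhabits rho) (is_top u).

Lemma top_spec u : is_top u (top u).
Proof.
  unfold top. apply epsilon_spec. destruct (Hcov u) as [x0 Hx0].
  destruct (least_nat (fun n => exists x, B x u /\ depth x = n)) as [n [[x [Hx E]] Hmin]];
    [eauto|].
  exists x. split; [exact Hx|]. intros y Hy. subst n. apply Hmin. eauto.
Qed.

Lemma top_bag u : B (top u) u.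
Proof. apply top_spec. Qed.

Lemma top_min u y : B y u -> depth (top u) <= depth y.
Proof. apply top_spec. Qed.

Lemma top_below u z : B z u -> below (top u) z.
Proof.
  intros Hz. destruct (Hbcon u (top u) z (top_bag u) Hz) as [q [k [Hp [H0 [Hk HB]]]]].
  destruct k as [|k]; [subst; rewrite <- H0; apply below_refl|].
  destruct (path_first_step q (S k) Hp ltac:(lia)) as [[Hn E]|[Hn [E HS]]].
  - exfalso. pose proof (top_min u (q 1) (HB 1 ltac:(lia))). rewrite H0 in *.
    destruct (parent_spec (top u)); [congruence|]. rewrite E in *. lia.
  - rewrite <- Hk, <- H0. apply below_trans with (q 1); [|apply HS; lia].
    rewrite E. apply below_parent, Hn.
Qed.

Lemma top_unique u x : B x u -> depth x <= depth (top u) -> x = top u.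
Proof.
  intros Hx Hd. symmetry. apply below_eq; [apply top_below, Hx|].
  pose proof (top_min u x Hx). lia.
Qed.

Lemma bag_first_step u x z : B x u -> B z u -> z <> x ->
  (x <> rho /\ B (parent x) u) \/ (exists y, y <> rho /\ parent y = x /\ below y z).
Proof.
  intros Hx Hz Hne. destruct (Hbcon u x z Hx Hz) as [q [k [Hp [H0 [Hk HB]]]]].
  destruct k as [|k]; [exfalso; apply Hne; congruence|].
  destruct (path_first_step q (S k) Hp ltac:(lia)) as [[Hn E]|[Hn [E HS]]].
  - left. rewrite <- H0. split; [exact Hn|]. rewrite <- E. apply HB. lia.
  - right. exists (q 1). repeat split; [exact Hn|congruence|]. rewrite <- Hk. apply HS; lia.
Qed.

Lemma bag_at_child y z u : below y z -> y <> rho -> B z u -> B (parent y) u -> B y u.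
Proof.
  intros Hs Hy Hz Hp. destruct (Hbcon u z (parent y) Hz Hp) as [q [k [Hq [H0 [Hk HB]]]]].
  destruct (leave_subtree y q k (proj2 Hq)) as [i [Hi [E _]]].
  - congruence.
  - rewrite Hk. intros H. apply below_depth in H. destruct (parent_spec y Hy). lia.
  - rewrite <- E. apply HB. lia.
Qed.

Lemma bags_below_child y z u : below y z -> y <> rho -> B z u -> ~ B (parent y) u ->
  forall z', B z' u -> below y z'.
Proof.
  intros Hs Hy Hz Hp z' Hz'. apply NNPP. intros Hn.
  destruct (Hbcon u z z' Hz Hz') as [q [k [Hq [H0 [Hk HB]]]]].
  destruct (leave_subtree y q k (proj2 Hq)) as [i [Hi [E [_ E2]]]]; [congruence|congruence|].
  apply Hp. rewrite <- E2. apply HB. lia.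
Qed.

(** Helly property: the vertices of a nonempty clique share a bag, namely the top
    node of maximal depth among them. *)
Lemma clique_in_bag C : ordered_clique G C -> C <> [] -> exists x, forall c, In c C -> B x c.
Proof.
  intros [Hnd Hadj] HC.
  destruct (max_in_list (fun c => depth (top c)) C HC) as [cs [Hcs Hmax]].
  exists (top cs). intros c Hc.
  destruct (classic (c = cs)) as [->|Hne]; [apply top_bag|].
  destruct (In_nth_error _ _ Hc) as [i Hi], (In_nth_error _ _ Hcs) as [j Hj].
  assert (Hcc : adj G c cs) by (apply (Hadj i j); auto; intros ->; congruence).
  destruct (Hedge _ _ Hcc) as [z [Hz1 Hz2]].
  destruct (classic (below (top cs) (top c))) as [Hs|Hns].
  - replace (top cs) with (top c); [apply top_bag|].
    symmetry. apply below_eq; [exact Hs|]. pose proof (below_depth _ _ Hs).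
    specialize (Hmax c Hc). simpl in Hmax. lia.
  - destruct (Hbcon c z (top c) Hz1 (top_bag c)) as [q [k [Hq [H0 [Hk HB]]]]].
    destruct (leave_subtree (top cs) q k (proj2 Hq)) as [i0 [Hi0 [E _]]].
    + rewrite H0. apply top_below, Hz2.
    + congruence.
    + rewrite <- E. apply HB. lia.
Qed.

Definition hanging x u := exists y,
  y <> rho /\ parent y = x /\ ~ B x u /\ forall z, B z u -> below y z.

Lemma hanging_deeper x u : hanging x u -> depth x < depth (top u).
Proof.
  intros [y [Hy [Ey [_ Hs]]]]. pose proof (below_depth _ _ (Hs _ (top_bag u))).
  destruct (parent_spec y Hy). subst x. lia.
Qed.

Lemma parent_bag_shallower x u : x <> rho -> B (parent x) u -> depth (top u) < depth x.
Proof. intros Hx Hp. pose proof (top_min u _ Hp). destruct (parent_spec x Hx). lia. Qed.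

Section Construction.
Variable U : graph.
Variables r m : nat.
Hypothesis Htor : forall x, torso_in G U eT B x.
Hypothesis HU : colstar_le U r m.
Hypothesis Hr : 1 <= r.
Variable C : list (vert G).
Hypothesis HC : ordered_clique G C.
Hypothesis HCroot : forall c, In c C -> B rho c.
Variable g : vert G -> nat.
Hypothesis ginj : forall u w, g u = g w -> u = w.

Notation Tor x := (torso G eT B x).

Lemma parent_bag_clique x (l : list (vert (Tor x))) : x <> rho -> NoDup l ->
  (forall s, In s l -> B (parent x) (proj1_sig s)) -> ordered_clique (Tor x) l.
Proof.
  intros Hx Hnd Hl. split; [exact Hnd|].
  intros i j a b Hij Ha Hb. split.
  - intros E. exact (nodup_neq l i j a b Hnd Hij Ha Hb (sig_ext a b E)).
  - right. exists (parent x). split; [apply parent_spec, Hx|].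
    split; apply Hl; eapply nth_error_In; eauto.
Qed.

(** The clique that the order at [x] has to start with: [C] at the root, the
    adhesion set with the parent elsewhere. For [r >= 1] the latter has at most [m]
    elements (it is a clique of the torso, which embeds in [U]), so it is finite. *)
Definition is_adhesion x (L : list (vert (Tor x))) : Prop :=
  ordered_clique (Tor x) L /\
  (x = rho -> map (@proj1_sig _ _) L = C) /\
  (x <> rho -> forall s, B (parent x) (proj1_sig s) <-> In s L).

Lemma adhesion_exists x : exists L, is_adhesion x L.
Proof.
  destruct (classic (x = rho)) as [->|Hx].
  - destruct (lift_list (B rho) C HCroot) as [L E]. exists L.
    split; [|split; [auto|congruence]].
    destruct HC as [Hnd Hadj]. rewrite <- E in Hnd, Hadj. split; [exact (NoDup_map_inv _ _ Hnd)|].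
    intros i j a b Hij Ha Hb.
    assert (Ha' : nth_error (map (@proj1_sig _ _) L) i = Some (proj1_sig a))
      by exact (map_nth_error _ _ _ Ha).
    assert (Hb' : nth_error (map (@proj1_sig _ _) L) j = Some (proj1_sig b))
      by exact (map_nth_error _ _ _ Hb).
    split; [exact (nodup_neq _ i j _ _ Hnd Hij Ha' Hb')|left; exact (Hadj i j _ _ Hij Ha' Hb')].
  - destruct (finite_enum (fun s : vert (Tor x) => B (parent x) (proj1_sig s)) m)
      as [L [Hnd HL]].
    + intros l Hnd Hl. apply (clique_length_le (Tor x) r m l Hr).
      * exact (torso_colstar G U eT B x r m (Htor x) HU).
      * apply parent_bag_clique; auto.
    + exists L. split; [apply parent_bag_clique; auto; apply HL|]. split; [congruence|auto].
Qed.

Definition adhesion x := epsilon (inhabits []) (is_adhesion x).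

Lemma adhesion_spec x : is_adhesion x (adhesion x).
Proof. unfold adhesion. apply epsilon_spec, adhesion_exists. Qed.

Definition good_torso_order x (R : vert (Tor x) -> vert (Tor x) -> Prop) : Prop :=
  total_order R /\ order_extends R (adhesion x) /\ forall s, card_le (Sr (Tor x) R r s) m.

Definition torso_order x := epsilon (inhabits (fun _ _ => True)) (good_torso_order x).

Lemma torso_order_spec x : good_torso_order x (torso_order x).
Proof.
  unfold torso_order. apply epsilon_spec.
  exact (torso_colstar G U eT B x r m (Htor x) HU _ (proj1 (adhesion_spec x))).
Qed.

Definition bag_le x u w := exists (Hu : B x u) (Hw : B x w),
  torso_order x (exist _ u Hu) (exist _ w Hw).

Lemma bag_le_elim x u w (Hu : B x u) (Hw : B x w) :
  bag_le x u w -> torso_order x (exist _ u Hu) (exist _ w Hw).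
Proof.
  intros [Hu' [Hw' H]]. rewrite (proof_irrelevance _ Hu Hu'), (proof_irrelevance _ Hw Hw').
  exact H.
Qed.

Lemma bag_le_total x : (forall u, B x u -> bag_le x u u) /\
  (forall u w, bag_le x u w -> bag_le x w u -> u = w) /\
  (forall u v w, bag_le x u v -> bag_le x v w -> bag_le x u w) /\
  (forall u w, B x u -> B x w -> bag_le x u w \/ bag_le x w u).
Proof.
  destruct (torso_order_spec x) as [[Hrefl [Hanti [Htrans Htot]]] _]. repeat split.
  - intros u Hu. exists Hu, Hu. apply Hrefl.
  - intros u w [Hu [Hw H1]] H2. apply bag_le_elim with (Hu := Hw) (Hw := Hu) in H2.
    exact (f_equal (@proj1_sig _ _) (Hanti _ _ H1 H2)).
  - intros u v w [Hu [Hv H1]] H2. destruct H2 as [Hv' [Hw H2]].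
    rewrite (proof_irrelevance _ Hv' Hv) in H2. exists Hu, Hw. eauto.
  - intros u w Hu Hw. destruct (Htot (exist _ u Hu) (exist _ w Hw)); [left|right];
      do 2 eexists; eauto.
Qed.

(** [rep u] is a fixed vertex with the same top node as [u]; its code identifies the
    top node of [u] by a natural number. *)
Definition rep u := epsilon (inhabits u) (fun w => top w = top u).
Definition node_code u := g (rep u).

Lemma rep_top u : top (rep u) = top u.
Proof. unfold rep. apply epsilon_spec. eauto. Qed.

Lemma node_code_top u w : node_code u = node_code w <-> top u = top w.
Proof.
  unfold node_code. split.
  - intros E. apply ginj in E. rewrite <- (rep_top u), <- (rep_top w), E. reflexivity.
  - intros E. unfold rep. rewrite E, (proof_irrelevance _ (inhabits u) (inhabits w)).
    reflexivity.
Qed.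

Definition within_top u w := bag_le (top u) u w.
Definition glued_order := lex (fun u => depth (top u)) (lex node_code within_top).

Lemma glued_order_total : total_order glued_order.
Proof.
  assert (Hinner : total_order (lex node_code within_top)).
  { apply lex_total; unfold within_top.
    - intros a. apply (proj1 (bag_le_total _)), top_bag.
    - intros a b E H1 H2. apply node_code_top in E. rewrite E in H1.
      exact (proj1 (proj2 (bag_le_total _)) _ _ H1 H2).
    - intros a b c E1 E2 H1 H2. apply node_code_top in E1, E2. rewrite E1 in H1 |- *.
      exact (proj1 (proj2 (proj2 (bag_le_total _))) _ _ _ H1 H2).
    - intros a b E. apply node_code_top in E. rewrite <- E.
      apply (proj2 (proj2 (proj2 (bag_le_total _)))); [|rewrite E]; apply top_bag. }
  destruct Hinner as [Hrefl [Hanti [Htrans Htot]]].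
  apply lex_total; eauto.
Qed.

Lemma glued_order_same_top u w : top u = top w -> glued_order u w <-> bag_le (top u) u w.
Proof.
  intros E. unfold glued_order. rewrite lex_same_key by (simpl; rewrite E; reflexivity).
  rewrite lex_same_key by (apply node_code_top, E). reflexivity.
Qed.

Lemma top_root u : B rho u -> top u = rho.
Proof. intros Hu. symmetry. apply top_unique; [exact Hu|]. rewrite depth_root. lia. Qed.

(** The vertices of [C] come first, in their given order: they are exactly the
    vertices with top node [rho], ordered by the root torso order, which extends [C]. *)
Lemma glued_order_extends : order_extends glued_order C.
Proof.
  destruct (adhesion_spec rho) as [_ [HL _]]. specialize (HL eq_refl).
  destruct (torso_order_spec rho) as [_ [[Hord Hfirst] _]].
  split.
  - intros i j a b Hij Ha Hb.
    assert (Hrep : forall n c, nth_error C n = Some c ->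
              exists Hc, nth_error (adhesion rho) n = Some (exist _ c Hc)).
    { intros n c Hn. rewrite <- HL in Hn.
      destruct (nth_error_map_inv _ _ _ _ Hn) as [[c' Hc] [Hn' E]]. simpl in E. subst c'.
      eauto. }
    destruct (Hrep i a Ha) as [HaB Ha'], (Hrep j b Hb) as [HbB Hb'].
    destruct (Hord _ _ _ _ Hij Ha' Hb') as [Hle Hne]. split.
    + apply glued_order_same_top; [rewrite !top_root; auto|]. rewrite (top_root a HaB).
      exists HaB, HbB. exact Hle.
    + intros ->. apply Hne. f_equal. apply proof_irrelevance.
  - intros c u Hc Hu. assert (HcB : B rho c) by auto. split; [|intros ->; contradiction].
    destruct (classic (B rho u)) as [HuB|HuB].
    + apply glued_order_same_top; [rewrite !top_root; auto|]. rewrite (top_root c HcB).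
      exists HcB, HuB. apply Hfirst.
      * rewrite <- HL in Hc. apply in_map_iff in Hc as [[c' Hc'] [E Hin]]. simpl in E.
        subst c'. rewrite (proof_irrelevance _ HcB Hc'). exact Hin.
      * intros Hin. apply Hu. rewrite <- HL. exact (in_map (@proj1_sig _ _) _ _ Hin).
    + left. rewrite (top_root c HcB), depth_root.
      destruct (depth (top u)) eqn:E; [|lia].
      exfalso. apply HuB. rewrite <- (depth_zero _ E). apply top_bag.
Qed.

Definition torso_edge x a b := a <> b /\ (adj G a b \/ exists y, eT x y /\ B y a /\ B y b).

Section PathToTorso.
Variable v : vert G.
Variable q : nat -> vert G.
Variable k : nat.
Hypothesis Hq : is_path (adj G) q k.
Hypothesis Hq0 : q 0 = v.
Hypothesis Hint : forall i, 1 <= i -> i <= k - 1 -> lt_of glued_order v (q i).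

Lemma interior_depth i : 1 <= i -> i <= k - 1 -> depth (top v) <= depth (top (q i)).
Proof. intros H1 H2. exact (lex_key_le _ _ _ _ (proj1 (Hint i H1 H2))). Qed.

(** The path never reaches the parent bag of [top v] (its inner vertices come after
    [v]), so every vertex lies in the bag of [top v] or hangs below it. *)
Lemma path_near_top i : i <= k -> B (top v) (q i) \/ hanging (top v) (q i).
Proof.
  induction i as [|i IH]; intros Hi.
  { left. rewrite Hq0. apply top_bag. }
  destruct (classic (B (top v) (q (S i)))) as [Hin|Hout]; [left; exact Hin|right].
  destruct (Hedge _ _ (proj2 Hq i ltac:(lia))) as [z [Hz1 Hz2]].
  assert (Hchild : exists y, y <> rho /\ parent y = top v /\ below y z).
  { destruct (IH ltac:(lia)) as [Hb|[y [Hy [Ey [_ Hs]]]]]; [|eauto].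
    assert (Hzx : z <> top v) by (intros ->; contradiction).
    destruct (bag_first_step (q i) (top v) z Hb Hz1 Hzx) as [[Hxr Hpx]|Hy]; [|exact Hy].
    exfalso. pose proof (parent_bag_shallower _ _ Hxr Hpx).
    destruct i as [|i]; [rewrite Hq0 in *; lia|].
    pose proof (interior_depth (S i) ltac:(lia) ltac:(lia)). lia. }
  destruct Hchild as [y [Hy [Ey Hyz]]].
  exists y. repeat split; auto. apply (bags_below_child y z); auto. rewrite Ey. exact Hout.
Qed.

(** Hanging vertices come after [v], so the end of the path is in the bag of [top v]. *)
Lemma path_end_in_top_bag : glued_order (q k) v -> B (top v) (q k).
Proof.
  intros Hle. destruct (path_near_top k (le_n _)) as [Hb|Hh]; [exact Hb|].
  exfalso. pose proof (hanging_deeper _ _ Hh). pose proof (lex_key_le _ _ _ _ Hle). lia.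
Qed.

(** Between two consecutive visits to the bag of [top v] the path runs inside the
    subtree of one child [y]; the bag of [y] then contains both visited vertices,
    which are therefore adjacent in the torso. *)
Lemma path_bridge a b : a < b -> b <= k -> B (top v) (q a) -> B (top v) (q b) ->
  (forall l, a < l -> l < b -> ~ B (top v) (q l)) -> torso_edge (top v) (q a) (q b).
Proof.
  intros Hab Hbk Ha Hb Hgap. split; [intros E; apply (proj1 Hq) in E; lia|].
  destruct (Nat.eq_dec b (S a)) as [->|Hne]; [left; apply (proj2 Hq); lia|right].
  destruct (path_near_top (S a) ltac:(lia)) as [Hin|[y [Hy [Ey [_ Hs]]]]];
    [exfalso; apply (Hgap (S a)); auto; lia|].
  assert (Hall : forall t, S a + t < b -> forall z, B z (q (S a + t)) -> below y z).
  { induction t as [|t IHt]; intros Ht; [rewrite Nat.add_0_r; exact Hs|].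
    destruct (Hedge _ _ (proj2 Hq (S a + t) ltac:(lia))) as [z [Hz1 Hz2]].
    replace (S a + S t) with (S (S a + t)) by lia.
    apply (bags_below_child y z); [apply IHt; [lia|exact Hz1]|exact Hy|exact Hz2|].
    rewrite Ey. apply Hgap; lia. }
  exists y. split; [apply Hsym; rewrite <- Ey; apply parent_spec, Hy|]. split.
  - destruct (Hedge _ _ (proj2 Hq a ltac:(lia))) as [z [Hz1 Hz2]].
    apply (bag_at_child y z); [|exact Hy|exact Hz1|rewrite Ey; exact Ha].
    apply (Hall 0); [lia|]. rewrite Nat.add_0_r. exact Hz2.
  - destruct (Hedge _ _ (proj2 Hq (b - 1) ltac:(lia))) as [z [Hz1 Hz2]].
    replace (S (b - 1)) with b in Hz2 by lia.
    apply (bag_at_child y z); [|exact Hy|exact Hz2|rewrite Ey; exact Hb].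
    apply (Hall (b - 1 - S a)); [lia|]. replace (S a + (b - 1 - S a)) with (b - 1) by lia.
    exact Hz1.
Qed.
End PathToTorso.

(** A vertex of the bag of [top v] before [v] in [glued_order] is before [v] in the torso
    order: either it has the same top node, or it lies in the adhesion set, which the
    torso order puts first while [v] is not in it. *)
Lemma torso_order_before v w (Hw : B (top v) w) : glued_order w v ->
  torso_order (top v) (exist _ w Hw) (exist _ v (top_bag v)).
Proof.
  intros Hle. destruct (classic (top w = top v)) as [E|Hne].
  { apply bag_le_elim. rewrite <- E. apply glued_order_same_top; [exact E|exact Hle]. }
  destruct (bag_first_step w (top v) (top w) Hw (top_bag w) Hne)
    as [[Hxr Hpw]|[y [Hy [Ey Hs]]]].
  - destruct (adhesion_spec (top v)) as [_ [_ HL]].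
    destruct (torso_order_spec (top v)) as [_ [[_ Hfirst] _]].
    apply (Hfirst (exist _ w Hw) (exist _ v (top_bag v))); [apply HL; auto|].
    intros Hv. apply HL in Hv; [|exact Hxr]. simpl in Hv.
    pose proof (parent_bag_shallower _ _ Hxr Hv). lia.
  - exfalso. pose proof (below_depth _ _ Hs). pose proof (top_min w _ Hw).
    destruct (parent_spec y Hy). rewrite Ey in *. lia.
Qed.

(** An inner vertex of the bag of [top v] after [v] has top node [top v], hence comes
    after [v] in the torso order. *)
Lemma torso_order_after v u (Hu : B (top v) u) : lt_of glued_order v u ->
  lt_of (torso_order (top v)) (exist _ v (top_bag v)) (exist _ u Hu).
Proof.
  intros [Hle Hne].
  assert (E : top u = top v)
    by (symmetry; apply top_unique; [exact Hu|exact (lex_key_le _ _ _ _ Hle)]).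
  split.
  - apply bag_le_elim. apply glued_order_same_top; [congruence|exact Hle].
  - intros Eq. apply Hne. exact (f_equal (@proj1_sig _ _) Eq).
Qed.

(** Main step: the visits of an [S_r]-path of [G] to the bag of [top v] form an
    [S_r]-path of the torso at [top v]. *)
Lemma Sr_in_torso v w : Sr G glued_order r v w -> exists Hw : B (top v) w,
  Sr (Tor (top v)) (torso_order (top v)) r (exist _ v (top_bag v)) (exist _ w Hw).
Proof.
  intros [q [k [Hk [Hq [Hq0 [Hqk [Hwv Hint]]]]]]].
  assert (Hw : B (top v) w)
    by (rewrite <- Hqk; apply (path_end_in_top_bag v q k); auto; congruence).
  exists Hw.
  destruct (marked_subsequence (fun l => l <= k /\ B (top v) (q l))
    (fun a b => torso_edge (top v) (q a) (q b)))
    with (i := k) as [k' [s [S0 [Sk [Hk' [Hmono [Hrel HM]]]]]]].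
  - split; [lia|rewrite Hq0; apply top_bag].
  - intros a b Hab [_ Ha] [Hbk Hb] Hgap. apply (path_bridge v q k); auto.
    intros l H1 H2 Hl. apply (Hgap l H1 H2). split; [lia|exact Hl].
  - split; [lia|rewrite Hqk; exact Hw].
  - destruct (lift_fun (B (top v)) (fun j => q (s j)) k' (exist _ v (top_bag v)))
      as [p Hp]; [intros j Hj; apply HM, Hj|].
    assert (Hs_le : forall j, j <= k' -> s j <= k) by (intros j Hj; apply HM, Hj).
    exists p, k'. split; [lia|]. split; [split|].
    + intros j j' Hj Hj' E. apply (f_equal (@proj1_sig _ _)) in E. rewrite !Hp in E by auto.
      apply (proj1 Hq) in E; auto.
      destruct (Nat.lt_trichotomy j j') as [Hl|[|Hl]]; auto;
        [pose proof (Hmono j j' Hl Hj')|pose proof (Hmono j' j Hl Hj)]; lia.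
    + intros j Hj. change (torso_edge (top v) (proj1_sig (p j)) (proj1_sig (p (S j)))).
      rewrite !Hp by lia. apply Hrel, Hj.
    + split; [apply sig_ext; rewrite Hp, S0 by lia; exact Hq0|].
      split; [apply sig_ext; rewrite Hp, Sk by lia; exact Hqk|].
      split; [apply torso_order_before, Hwv|].
      intros j H1 H2.
      assert (Hsj : 1 <= s j <= k - 1).
      { pose proof (Hmono 0 j ltac:(lia) ltac:(lia)).
        pose proof (Hmono j k' ltac:(lia) (le_n _)). lia. }
      assert (Hu : B (top v) (q (s j))) by (apply HM; lia).
      replace (p j) with (exist (B (top v)) (q (s j)) Hu)
        by (apply sig_ext; simpl; rewrite Hp; auto; lia).
      apply torso_order_after, Hint; lia.
Qed.

Lemma construction_order : exists le, total_order le /\ order_extends le C /\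
  forall v, card_le (Sr G le r v) m.
Proof.
  exists glued_order. split; [exact glued_order_total|]. split; [exact glued_order_extends|].
  intros v. destruct (torso_order_spec (top v)) as [_ [_ Hcard]].
  destruct (Hcard (exist _ v (top_bag v))) as [l [Hl Hin]].
  exists (map (@proj1_sig _ _) l). split; [rewrite length_map; exact Hl|].
  intros w Hw. destruct (Sr_in_torso v w Hw) as [Hw' HS].
  exact (in_map (@proj1_sig _ _) _ _ (Hin _ HS)).
Qed.
End Construction.
End RootedDecomposition.
End RootedTree.

(** The bound passes from [U] to graphs in [D(U)], for [r >= 1]: root the
    decomposition at a node whose bag contains the prescribed clique. *)
Lemma colstar_le_decomposition (U G : graph) r m :
  in_D U G -> 1 <= r -> colstar_le U r m -> colstar_le G r m.
Proof.
  intros [X [eT [B [[[Hsym [Hirr [Hconn Hacyc]]] [Hcov [Hedge Hbcon]]] Htor]]]] Hr HU C HC.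
  destruct (classic (inhabited (vert G))) as [[v0]|Hni];
    [|exact (colstar_le_empty G r m Hni C HC)].
  destruct (vert_countable G) as [g ginj].
  assert (Hroot : exists rho, forall c, In c C -> B rho c).
  { destruct C as [|c0 C0]; [destruct (Hcov v0) as [x0 _]; exists x0; intros c []|].
    destruct (Hcov c0) as [x0 _].
    apply (clique_in_bag X eT Hsym Hirr Hconn Hacyc x0 G B Hcov Hedge Hbcon);
      [exact HC|discriminate]. }
  destruct Hroot as [rho Hrho].
  exact (construction_order X eT Hsym Hirr Hconn Hacyc rho G B Hcov Hedge Hbcon
           U r m Htor HU Hr C HC Hrho g ginj).
Qed.

(** For [r = 0] only [m >= 1] matters, and [U] is nonempty as soon as [G] is. *)
Lemma colstar_le_decomposition_zero (U G : graph) m :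
  in_D U G -> colstar_le U 0 m -> colstar_le G 0 m.
Proof.
  intros [X [eT [B [[_ [Hcov _]] Htor]]]] HU. apply colstar_le_zero. intros v.
  destruct (Hcov v) as [x Hx]. destruct (Htor x) as [f _].
  exact (colstar_le_pos U 0 m HU (f (exist _ v Hx))).
Qed.

Lemma colstar_le_in_D (U G : graph) r m : in_D U G -> colstar_le U r m -> colstar_le G r m.
Proof.
  intros HD. destruct r as [|r].
  - apply colstar_le_decomposition_zero, HD.
  - apply colstar_le_decomposition; [exact HD|lia].
Qed.

Lemma colstar_spec (G : graph) r : is_colstar G r (colstar G r).
Proof.
  unfold colstar. apply epsilon_spec.
  destruct (classic (exists m, colstar_le G r m)) as [Hm|Hn].
  - destruct (least_nat _ Hm) as [m [H1 H2]]. exists (Some m). split; assumption.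
  - exists None. intros m Hm. apply Hn. eauto.
Qed.

Theorem mainTheorem16 : forall (U G : graph) (r : nat),
  in_D U G -> ole (colstar G r) (colstar U r).
Proof.
  intros U G r HD.
  pose proof (colstar_spec U r) as SU. pose proof (colstar_spec G r) as SG.
  destruct (colstar U r) as [m|]; [|destruct (colstar G r); exact I].
  destruct SU as [HU _].
  pose proof (colstar_le_in_D U G r m HD HU) as HG.
  destruct (colstar G r) as [m'|]; simpl.
  - apply (proj2 SG), HG.
  - exact (SG m HG).
Qed.
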